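(* Assume the setting and hypotheses of part (ii) below, so that $A^L$ carries the product $(\alpha\cdot\beta)_g=\sum_{(h,k)}m_{h,k}(\alpha_h,\beta_k)$ ($(h,k)$ over representatives of $L_g$-orbits on $\{(h,k)\in G\times G\mid hk=g\}$). Let $g_1,\dots,g_t$ be representatives of the $L$-orbits on $G$, $L_i=L_{g_i}$, and use the additive isomorphism $A^L\cong\bigoplus_{i=1}^tA(g_i)^{L_i}$, under which $\alpha_i\in A(g_i)^{L_i}$ corresponds to $\sum_{y\in L/L_i}c_y(\alpha_i)\in A^L$. Let $\alpha_i\in A(g_i)^{L_i}$ and $\beta_j\in A(g_j)^{L_j}$. Let $D$ be a set of representatives of the double cosets $L_i\backslash L/L_j$, and for each $x\in D$ choose $k=k(x)\in\{1,\dots,t\}$ and $y=y(x)\in L$ with ${}^yg_i\,{}^{yx}g_j=g_k$. Then under this isomorphism $$\alpha_i\cdot\beta_j=\sum_{x\in D}m_{{}^yg_i,\,{}^{yx}g_j}\big(c_y(\alpha_i),\,c_{yx}(\beta_j)\big),$$ where the term indexed by $x$ lies in $A(g_{k(x)})$; i.e. the $A(g_k)^{L_k}$-component of $\alpha_i\cdot\beta_j$ is the sum of the terms with $k(x)=k$.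
   Context: Setting: $\Bbbk$ a commutative ring; $G,L$ finite groups with $L$ acting on $G$ by automorphisms ($x\cdot g={}^xg$, stabilizer $L_g$); free $\Bbbk$-modules $A(g)$ ($g\in G$) with $\Bbbk$-linear isomorphisms $c_{g,x}:A(g)\to A({}^xg)$ and bilinear maps $m_{g,h}:A(g)\times A(h)\to A(gh)$; $A=\bigoplus_g A(g)$, $c_x$ equal to $c_{g,x}$ on $A(g)$, $A^L$ the $L$-invariants; for $\alpha\in A$, $\alpha_g$ is its $A(g)$-component. (ii) The hypotheses: (H1) $c_1=\mathrm{id}$, $c_xc_y=c_{xy}$; (H2) $c_x\circ m_{g,h}=m_{{}^xg,{}^xh}\circ(c_x\times c_x)$; (H3) there is $1\in A(1)$, fixed by all $c_x$, which is a two-sided unit for the maps $m_{1,g},m_{g,1}$; (H4$'$) for all $g\in G$ and $\alpha,\beta,\gamma\in A^L$: $\sum_{(h,f)}\sum_{(d,e)}m_{h,f}(m_{d,e}(\alpha_d,\beta_e),\gamma_f)=\sum_{(d,k)}\sum_{(e,f)}m_{d,k}(\alpha_d,m_{e,f}(\beta_e,\gamma_f))$, with $(h,f)$ over representatives of $L_g$-orbits on pairs with $hf=g$, $(d,e)$ over representatives of $L_h$-orbits on pairs with $de=h$, $(d,k)$ over representatives of $L_g$-orbits on pairs with $dk=g$, $(e,f)$ over representatives of $L_k$-orbits on pairs with $ef=k$. *)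

From HB Require Import structures.
From mathcomp Require Import all_boot all_order all_algebra all_fingroup.
Set Implicit Arguments. Unset Strict Implicit. Unset Printing Implicit Defensive.
Import GRing.Theory.
Local Open Scope ring_scope.

Section Defs.
Variables (k : comPzRingType) (W : lmodType k) (G L : finGroupType).

Variable act : L -> G -> G.

Definition is_aut_action : Prop :=
  [/\ forall g, act 1%g g = g,
      forall x y g, act (x * y)%g g = act x (act y g)
    & forall x g h, act x (g * h)%g = (act x g * act x h)%g].

Definition stab (g : G) : {set L} := [set x | act x g == g].

Definition pairs_over (g : G) : {set G * G} := [set p | (p.1 * p.2)%g == g].

Definition act2 (x : L) (p : G * G) : G * G := (act x p.1, act x p.2).

Definition is_pair_reps (H : {set L}) (X R : {set G * G}) : Prop :=
  [/\ R \subset X,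
      forall p, p \in X -> exists2 r, r \in R & exists2 x, x \in H & p = act2 x r
    & forall r1 r2 x, r1 \in R -> r2 \in R -> x \in H -> r2 = act2 x r1 -> r1 = r2].

Definition pair_reps_family (R : G -> {set G * G}) : Prop :=
  forall g, is_pair_reps (stab g) (pairs_over g) (R g).

Definition is_orbit_reps (t : nat) (gs : 'I_t -> G) : Prop :=
  (forall h, exists i, exists y, act y (gs i) = h) /\
  (forall i j y, act y (gs i) = gs j -> i = j).

Definition is_lcoset_reps (H Y : {set L}) : Prop :=
  (forall z, exists2 y, y \in Y & exists2 a, a \in H & z = (y * a)%g) /\
  (forall y1 y2 a, y1 \in Y -> y2 \in Y -> a \in H -> y2 = (y1 * a)%g -> y1 = y2).

Definition is_dcoset_reps (H K D : {set L}) : Prop :=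
  (forall z, exists2 x, x \in D &
     exists a b, [/\ a \in H, b \in K & z = (a * x * b)%g]) /\
  (forall x1 x2 a b, x1 \in D -> x2 \in D -> a \in H -> b \in K ->
     x2 = (a * x1 * b)%g -> x1 = x2).

(* ---------- the modules A(g), realised as submodules S g of one module W ---------- *)
Variable S : G -> {pred W}.

Definition submod_family : Prop :=
  forall g, 0 \in S g /\
    (forall a u v, u \in S g -> v \in S g -> a *: u + v \in S g).

Definition free_in (P : {pred W}) : Prop :=
  exists (I : eqType) (b : I -> W),
    [/\ forall i, b i \in P,
        forall w, w \in P -> exists (s : seq I) (a : I -> k),
                              w = \sum_(i <- s) a i *: b i
      & forall (s : seq I) (a : I -> k), uniq s ->
          \sum_(i <- s) a i *: b i = 0 -> forall i, i \in s -> a i = 0].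

Variable c : G -> L -> W -> W.

Definition c_iso : Prop :=
  forall g x,
    [/\ forall u, u \in S g -> c g x u \in S (act x g),
        forall a u v, u \in S g -> v \in S g ->
          c g x (a *: u + v) = a *: c g x u + c g x v,
        forall v, v \in S (act x g) -> exists2 u, u \in S g & c g x u = v
      & forall u v, u \in S g -> v \in S g -> c g x u = c g x v -> u = v].

Variable m : G -> G -> W -> W -> W.

Definition m_bilinear : Prop :=
  forall g h,
    [/\ forall u v, u \in S g -> v \in S h -> m g h u v \in S (g * h)%g,
        forall a u u' v, u \in S g -> u' \in S g -> v \in S h ->
          m g h (a *: u + u') v = a *: m g h u v + m g h u' v
      & forall a u v v', u \in S g -> v \in S h -> v' \in S h ->
          m g h u (a *: v + v') = a *: m g h u v + m g h u v'].

Definition hypH1 : Prop :=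
  (forall g u, u \in S g -> c g 1%g u = u) /\
  (forall g x y u, u \in S g -> c (act y g) x (c g y u) = c g (x * y)%g u).

Definition hypH2 : Prop :=
  forall g h x u v, u \in S g -> v \in S h ->
    c (g * h)%g x (m g h u v) = m (act x g) (act x h) (c g x u) (c h x v).

Definition hypH3 : Prop :=
  exists2 e, e \in S 1%g &
    (forall x, c 1%g x e = e) /\
    (forall g u, u \in S g -> m 1%g g e u = u /\ m g 1%g u e = u).

(* elements of A (as their families of components) and of A^L *)
Definition inA (al : G -> W) : Prop := forall h, al h \in S h.
Definition inAL (al : G -> W) : Prop :=
  inA al /\ forall x h, c h x (al h) = al (act x h).

Definition hypH4' : Prop :=
  forall (g : G) (al be ga : G -> W), inAL al -> inAL be -> inAL ga ->
  forall (R1 : {set G * G}) (R2 : G -> {set G * G})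
         (R3 : {set G * G}) (R4 : G -> {set G * G}),
    is_pair_reps (stab g) (pairs_over g) R1 ->
    (forall h, is_pair_reps (stab h) (pairs_over h) (R2 h)) ->
    is_pair_reps (stab g) (pairs_over g) R3 ->
    (forall kk, is_pair_reps (stab kk) (pairs_over kk) (R4 kk)) ->
    \sum_(p in R1) \sum_(q in R2 p.1)
        m p.1 p.2 (m q.1 q.2 (al q.1) (be q.2)) (ga p.2)
    = \sum_(p in R3) \sum_(q in R4 p.2)
        m p.1 p.2 (al p.1) (m q.1 q.2 (be q.1) (ga q.2)).

Definition prodAL (R : G -> {set G * G}) (al be : G -> W) : G -> W :=
  fun g => \sum_(p in R g) m p.1 p.2 (al p.1) (be p.2).

Definition transfer (Y : {set L}) (gi : G) (u : W) : G -> W :=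
  fun h => \sum_(y in Y | act y gi == h) c gi y u.

End Defs.

(* Taking gamma to be the unit of A^L in (H4') shows that the product on A^L may
   be computed with any representatives of the L_g-orbits on pairs over g.
   The images of alpha_i and beta_j are supported on the L-orbits of g_i and
   g_j, so only pairs in L.g_i x L.g_j contribute.  The double coset
   correspondence L_i \ L / L_j = L-orbits on L.g_i x L.g_j shows that the pairs
   (^y g_i, ^(yx) g_j) with x in D and k(x) = l represent the L_{g_l}-orbits of
   such pairs over g_l, and on them the images of alpha_i and beta_j are
   c_y(alpha_i) and c_(yx)(beta_j). *)

From HB Require Import structures.
From mathcomp Require Import all_boot all_order all_algebra all_fingroup.
Set Implicit Arguments. Unset Strict Implicit. Unset Printing Implicit Defensive.
Import GRing.Theory.
Local Open Scope ring_scope.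

Section AutAction.

Variables (G L : finGroupType) (act : L -> G -> G).
Hypothesis act_aut : is_aut_action act.

Lemma act1g g : act 1%g g = g.
Proof. by case: act_aut. Qed.

Lemma actMl x y g : act (x * y)%g g = act x (act y g).
Proof. by case: act_aut. Qed.

Lemma actMr x g h : act x (g * h)%g = (act x g * act x h)%g.
Proof. by case: act_aut. Qed.

Lemma actgK x : cancel (act x) (act x^-1%g).
Proof. by move=> g; rewrite -actMl mulVg act1g. Qed.

Lemma actg1 x : act x 1%g = 1%g.
Proof. by apply: (mulgI (act x 1%g)); rewrite -actMr !mulg1. Qed.

Lemma stab_group_set g : group_set (stab act g).
Proof.
apply/group_setP; split=> [|x y]; first by rewrite inE act1g.
by rewrite !inE => /eqP Ex /eqP Ey; rewrite actMl Ey Ex.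
Qed.

Canonical stab_group g := Group (stab_group_set g).

Lemma stabE a g : a \in stab act g -> act a g = g.
Proof. by rewrite inE => /eqP. Qed.

Lemma act2K x : cancel (act2 act x) (act2 act x^-1%g).
Proof. by case=> g h; rewrite /act2 /= !actgK. Qed.

Lemma pair_reps_unit h R :
  is_pair_reps act (stab act h) (pairs_over h) R -> (h, 1%g) \in R.
Proof.
case=> _ R_cover _; have /R_cover[r rR [a aS def_h1]] : (h, 1%g) \in pairs_over h.
  by rewrite inE mulg1.
suff -> : (h, 1%g) = r by [].
by rewrite -[r](act2K a) -def_h1 /act2 /= actg1 (stabE (groupVr aS)).
Qed.

Lemma pair_reps_sum_unit (V : nmodType) h R (F : G * G -> V) :
    is_pair_reps act (stab act h) (pairs_over h) R ->
    (forall p, p \in R -> p.2 != 1%g -> F p = 0) ->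
  \sum_(p in R) F p = F (h, 1%g).
Proof.
move=> R_reps F0; rewrite (bigD1 (h, 1%g)) ?pair_reps_unit //= big1 ?addr0 //.
move=> [p1 p2] /andP[pR ne_p]; apply: F0 => //=; apply: contraNneq ne_p => p2_1.
by case: R_reps => /subsetP/(_ _ pR) + _ _; rewrite inE /= p2_1 mulg1 => /eqP->.
Qed.

Lemma pair_reps_setU g (O Q R : {set G * G}) :
    (forall a p, a \in stab act g -> (act2 act a p \in O) = (p \in O)) ->
    is_pair_reps act (stab act g) (pairs_over g :&: O) Q ->
    is_pair_reps act (stab act g) (pairs_over g) R ->
  is_pair_reps act (stab act g) (pairs_over g) (Q :|: [set r in R | r \notin O]).
Proof.
move=> O_stable [Q_sub Q_cover Q_uniq] [R_sub R_cover R_uniq].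
have QO : Q \subset O by apply: subset_trans Q_sub (subsetIr _ _).
split.
- rewrite subUset (subset_trans Q_sub (subsetIl _ _)) /=.
  by apply/subsetP=> r; rewrite inE => /andP[/(subsetP R_sub)].
- move=> p pX; case: (boolP (p \in O)) => pO.
    have [|r rQ [a aS ->]] := Q_cover p; first by rewrite inE pX.
    by exists r; [rewrite inE rQ | exists a].
  have [r rR [a aS def_p]] := R_cover p pX; exists r; last by exists a.
  by rewrite !inE rR -(O_stable a) // -def_p pO orbT.
- move=> r1 r2 x r1R r2R xS def_r2; move: r1R r2R; rewrite !in_setU !in_set.
  have r12O : (r2 \in O) = (r1 \in O) by rewrite def_r2 O_stable.
  case/orP=> [r1Q | /andP[r1R r1O]] r2QR.
    have r2Q : r2 \in Q.
      by move: r2QR; rewrite r12O (subsetP QO _ r1Q) andbF orbF.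
    exact: Q_uniq r1Q r2Q xS def_r2.
  have r2R : r2 \in R.
    case/orP: r2QR => [/(subsetP QO)|/andP[] //]; by rewrite r12O (negPf r1O).
  exact: R_uniq r1R r2R xS def_r2.
Qed.

Definition Lorbit (g : G) : {set G} := [set act y g | y : L].

Lemma LorbitP g h : reflect (exists y, h = act y g) (h \in Lorbit g).
Proof.
by apply: (iffP imsetP) => [[y _ ->]|[y ->]]; exists y.
Qed.

Lemma Lorbit_act x g h : (act x h \in Lorbit g) = (h \in Lorbit g).
Proof.
apply/LorbitP/LorbitP=> [[y def_xh]|[y ->]]; last by exists (x * y)%g; rewrite actMl.
by exists (x^-1 * y)%g; rewrite actMl -def_xh actgK.
Qed.

Lemma setX_Lorbit_act2 gi gj a p :
  (act2 act a p \in setX (Lorbit gi) (Lorbit gj)) = (p \in setX (Lorbit gi) (Lorbit gj)).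
Proof. by rewrite !inE /= !Lorbit_act. Qed.

Section DoubleCosets.

Variables (gi gj : G) (D : {set L}) (yy : L -> L).
Hypothesis D_reps : is_dcoset_reps (stab act gi) (stab act gj) D.

Definition dcoset_pair x := (act (yy x) gi, act (yy x * x)%g gj).

Lemma dcoset_pair_inj x1 x2 a : x1 \in D -> x2 \in D ->
  act2 act a (dcoset_pair x1) = dcoset_pair x2 -> x1 = x2.
Proof.
move=> x1D x2D [Ei Ej]; set b := ((yy x2)^-1 * a * yy x1)%g.
have bS : b \in stab act gi by rewrite inE !actMl Ei actgK.
have cS : (x2^-1 * b * x1)%g \in stab act gj.
  have -> : (x2^-1 * b * x1 = (yy x2 * x2)^-1 * (a * (yy x1 * x1)))%g.
    by rewrite /b invMg !mulgA.
  by rewrite inE actMl actMl Ej actgK.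
clearbody b; apply: esym (proj2 D_reps x2 x1 b^-1%g _ x2D x1D (groupVr bS) cS _).
by rewrite !mulgA mulgK mulVg mul1g.
Qed.

Lemma dcoset_pair_cover p : p \in setX (Lorbit gi) (Lorbit gj) ->
  exists2 x, x \in D & exists a, p = act2 act a (dcoset_pair x).
Proof.
case: p => p1 p2; rewrite inE /= => /andP[/LorbitP[z ->] /LorbitP[w ->]].
have [x xD [a [b [aS bS def_zw]]]] := proj1 D_reps (z^-1 * w)%g.
exists x => //; exists (z * a * (yy x)^-1)%g.
have def_w : w = (z * (a * x * b))%g by rewrite -def_zw mulKVg.
have E1 : (z * a * (yy x)^-1 * yy x = z * a)%g by rewrite mulgKV.
have E2 : (z * a * (yy x)^-1 * (yy x * x) = z * a * x)%g by rewrite mulgA mulgKV.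
by rewrite /act2 /= -!actMl E1 E2 def_w !actMl (stabE aS) (stabE bS).
Qed.

Lemma dcoset_pair_injective : {in D &, injective dcoset_pair}.
Proof.
move=> x1 x2 x1D x2D E; apply: (dcoset_pair_inj (a := 1%g)) => //.
by rewrite -E /act2 !act1g; case: (dcoset_pair x1).
Qed.

Variables (t : nat) (gs : 'I_t -> G) (kk : L -> 'I_t).
Hypothesis gs_inj : forall i j y, act y (gs i) = gs j -> i = j.
Hypothesis dcoset_pairM : forall x, x \in D ->
  ((dcoset_pair x).1 * (dcoset_pair x).2)%g = gs (kk x).

Lemma dcoset_pair_reps l :
  is_pair_reps act (stab act (gs l)) (pairs_over (gs l) :&: setX (Lorbit gi) (Lorbit gj))
    (dcoset_pair @: [set x in D | kk x == l]).
Proof.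
split.
- apply/subsetP=> _ /imsetP[x /[!inE] /andP[xD /eqP <-] ->].
  rewrite dcoset_pairM // eqxx /=.
  by apply/andP; split; apply/LorbitP; eexists.
- move=> p /setIP[pX /dcoset_pair_cover[x xD [a def_p]]].
  have def_gl : act a (gs (kk x)) = gs l.
    by move: pX; rewrite inE def_p => /eqP <-; rewrite -dcoset_pairM // actMr.
  have kx : kk x = l by apply: gs_inj def_gl.
  exists (dcoset_pair x); first by apply/imsetP; exists x; rewrite // inE xD kx eqxx.
  by exists a; rewrite // inE -{1}kx def_gl.
- move=> _ _ a /imsetP[x1 /[!inE] /andP[x1D _] ->] /imsetP[x2 /[!inE] /andP[x2D _] ->] _.
  by move/esym/dcoset_pair_inj => -> //.
Qed.

End DoubleCosets.

End AutAction.

Section GradedModule.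

Variables (k : comPzRingType) (W : lmodType k) (G L : finGroupType).
Variables (act : L -> G -> G) (S : G -> {pred W}).
Variables (c : G -> L -> W -> W) (m : G -> G -> W -> W -> W).
Hypotheses (act_aut : is_aut_action act) (S_submod : submod_family S).
Hypotheses (c_lin : c_iso act S c) (m_bilin : m_bilinear S m).
Hypotheses (c_H1 : hypH1 act S c) (unit_H3 : hypH3 S c m).
Hypothesis assoc_H4 : hypH4' act S c m.

Lemma linear_on0 (U V : lmodType k) (P : {pred U}) (f : U -> V) : 0 \in P ->
  (forall a u v, u \in P -> v \in P -> f (a *: u + v) = a *: f u + f v) -> f 0 = 0.
Proof.
move=> P0 /(_ 1 0 0 P0 P0); rewrite !scale1r addr0 => f00.
by apply: (addrI (f 0)); rewrite addr0 -f00.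
Qed.

Lemma mem0S g : 0 \in S g.
Proof. by case: (S_submod g). Qed.

Lemma c0 g x : c g x 0 = 0.
Proof. by apply: (linear_on0 (mem0S g)); case: (c_lin g x). Qed.

Lemma m0l g h v : v \in S h -> m g h 0 v = 0.
Proof.
move=> vS; apply: (linear_on0 (f := m g h ^~ v) (mem0S g)) => a u u' uS u'S.
by case: (m_bilin g h) => _ -> .
Qed.

Lemma m0r g h u : u \in S g -> m g h u 0 = 0.
Proof.
move=> uS; apply: (linear_on0 (mem0S h)) => a v v' vS v'S.
by case: (m_bilin g h) => _ _ ->.
Qed.

Lemma c_comp g x y u : u \in S g -> c (act y g) x (c g y u) = c g (x * y)%g u.
Proof. by case: c_H1 => _; apply. Qed.

Lemma m_mem_pairs g p u v :
  p \in pairs_over g -> u \in S p.1 -> v \in S p.2 -> m p.1 p.2 u v \in S g.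
Proof. by rewrite inE => /eqP <-; case: (m_bilin p.1 p.2) => + _ _; apply. Qed.

Section Transfer.

Variables (gi : G) (Y : {set L}) (u : W).
Hypotheses (Y_reps : is_lcoset_reps (stab act gi) Y) (uS : u \in S gi).
Hypothesis u_inv : forall x, x \in stab act gi -> c gi x u = u.

Lemma transfer_act y : transfer act c Y gi u (act y gi) = c gi y u.
Proof.
have [z zY [a aS ->]] := proj1 Y_reps y.
rewrite /transfer (big_pred1 z) => [|z'] /=.
  by rewrite -c_comp // (stabE aS) (u_inv aS).
rewrite (actMl act_aut) (stabE aS); apply/andP/eqP => [[z'Y /eqP E]|->]; last first.
  by rewrite zY.
apply/esym/(proj2 Y_reps z z' (z^-1 * z')%g) => //; last by rewrite mulKVg.
by rewrite inE (actMl act_aut) E (actgK act_aut).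
Qed.

Lemma transfer_out h : h \notin Lorbit act gi -> transfer act c Y gi u h = 0.
Proof.
move=> hO; apply: big1 => y /andP[_ /eqP def_h].
by case/negP: hO; apply/LorbitP; exists y.
Qed.

Lemma transfer_inAL : inAL act S c (transfer act c Y gi u).
Proof.
split=> [h|x h]; (case: (boolP (h \in Lorbit act gi)) => [/LorbitP[y ->]|hO]).
- by rewrite transfer_act; case: (c_lin gi y) => + _ _ _; apply.
- by rewrite transfer_out // mem0S.
- by rewrite -(actMl act_aut) !transfer_act c_comp.
- by rewrite !transfer_out ?c0 ?(Lorbit_act act_aut).
Qed.

End Transfer.

Definition delta1 (e : W) : G -> W := fun h => if h == 1%g then e else 0.

Lemma delta1_inAL e :
  e \in S 1%g -> (forall x, c 1%g x e = e) -> inAL act S c (delta1 e).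
Proof.
move=> eS ce; split=> [h|x h]; rewrite /delta1.
  by case: eqP => [->|_]; rewrite ?mem0S.
have -> : (act x h == 1%g) = (h == 1%g).
  by rewrite -{1}(actg1 act_aut x) (inj_eq (can_inj (actgK act_aut x))).
by case: eqP => [->|_]; rewrite ?c0.
Qed.

Lemma prodAL_reps RF g R al be :
    pair_reps_family act RF -> inAL act S c al -> inAL act S c be ->
    is_pair_reps act (stab act g) (pairs_over g) R ->
  prodAL m RF al be g = \sum_(p in R) m p.1 p.2 (al p.1) (be p.2).
Proof.
move=> RF_reps alL beL R_reps; have [e eS [ce e_unit]] := unit_H3.
have [alS beS] := (proj1 alL, proj1 beL).
have m_e h v : v \in S h -> m h 1%g v e = v by move=> vS; case: (e_unit h v vS).
have RFS h q : q \in RF h -> q \in pairs_over h.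
  by move=> qRF; case: (RF_reps h) => /subsetP/(_ _ qRF).
have := assoc_H4 alL beL (delta1_inAL eS ce) (RF_reps g) RF_reps R_reps RF_reps.
rewrite (pair_reps_sum_unit act_aut (RF_reps g)) => [|p pRF ne_p]; last first.
  apply: big1 => q qRF; rewrite /delta1 (negPf ne_p) m0r //.
  exact: m_mem_pairs (RFS _ _ qRF) (alS _) (beS _).
have -> : \sum_(q in RF g) m g 1%g (m q.1 q.2 (al q.1) (be q.2)) (delta1 e 1%g)
          = prodAL m RF al be g.
  apply: eq_bigr => q qRF; rewrite /delta1 eqxx m_e //.
  exact: m_mem_pairs (RFS _ _ qRF) (alS _) (beS _).
move=> ->; apply: eq_bigr => p pR.
rewrite (pair_reps_sum_unit act_aut (RF_reps p.2)) => [|q qRF ne_q].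
  by rewrite /delta1 eqxx m_e.
by rewrite /delta1 (negPf ne_q) m0r ?m0r.
Qed.

Lemma prodAL_restrict RF g (O Q : {set G * G}) al be :
    pair_reps_family act RF -> inAL act S c al -> inAL act S c be ->
    (forall a p, a \in stab act g -> (act2 act a p \in O) = (p \in O)) ->
    is_pair_reps act (stab act g) (pairs_over g :&: O) Q ->
    (forall p, p \notin O -> m p.1 p.2 (al p.1) (be p.2) = 0) ->
  prodAL m RF al be g = \sum_(p in Q) m p.1 p.2 (al p.1) (be p.2).
Proof.
move=> RF_reps alL beL O_stable Q_reps vanish.
rewrite (prodAL_reps RF_reps alL beL (pair_reps_setU O_stable Q_reps (RF_reps g))).
set X := [set r in RF g | r \notin O].
rewrite (eq_bigl [predU Q & X]) => [|p]; last by rewrite in_setU.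
rewrite bigU /=; last first.
  rewrite disjoints_subset; apply/subsetP=> p pQ; rewrite !inE negb_and negbK.
  by case: Q_reps => /subsetP/(_ _ pQ) /setIP[_ ->] _ _; rewrite orbT.
by rewrite [X in _ + X]big1 ?addr0 // => p; rewrite inE => /andP[_ /vanish].
Qed.

End GradedModule.

Unset Implicit Arguments.

Theorem corollary2p2 (k : comPzRingType) (W : lmodType k) (G L : finGroupType)
    (act : L -> G -> G) (S : G -> {pred W}) (c : G -> L -> W -> W)
    (m : G -> G -> W -> W -> W) :
  is_aut_action act ->
  submod_family S ->
  (forall g, free_in (S g)) ->
  c_iso act S c ->
  m_bilinear S m ->
  hypH1 act S c ->
  hypH2 act S c m ->
  hypH3 S c m ->
  hypH4' act S c m ->
  forall (t : nat) (gs : 'I_t -> G), is_orbit_reps act gs ->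
  forall R : G -> {set G * G}, pair_reps_family act R ->
  forall (i j : 'I_t) (Yi Yj : {set L}),
    is_lcoset_reps (stab act (gs i)) Yi ->
    is_lcoset_reps (stab act (gs j)) Yj ->
  forall ai bj : W,
    ai \in S (gs i) -> (forall x, x \in stab act (gs i) -> c (gs i) x ai = ai) ->
    bj \in S (gs j) -> (forall x, x \in stab act (gs j) -> c (gs j) x bj = bj) ->
  forall D : {set L}, is_dcoset_reps (stab act (gs i)) (stab act (gs j)) D ->
  forall (kk : L -> 'I_t) (yy : L -> L),
    (forall x, x \in D ->
       (act (yy x) (gs i) * act (yy x * x)%g (gs j))%g = gs (kk x)) ->
  forall l : 'I_t,
    prodAL m R (transfer act c Yi (gs i) ai) (transfer act c Yj (gs j) bj) (gs l)
    = \sum_(x in D | kk x == l)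
        m (act (yy x) (gs i)) (act (yy x * x)%g (gs j))
          (c (gs i) (yy x) ai) (c (gs j) (yy x * x)%g bj).
Proof.
move=> act_aut S_submod _ c_lin m_bilin c_H1 _ unit_H3 assoc_H4 t gs [_ gs_inj]
  R R_reps i j Yi Yj Yi_reps Yj_reps ai bj aiS ai_inv bjS bj_inv D D_reps kk yy kkP l.
have alL := transfer_inAL act_aut S_submod c_lin c_H1 Yi_reps aiS ai_inv.
have beL := transfer_inAL act_aut S_submod c_lin c_H1 Yj_reps bjS bj_inv.
rewrite (prodAL_restrict act_aut S_submod c_lin m_bilin unit_H3 assoc_H4 R_reps alL beL
  (fun a p _ => setX_Lorbit_act2 act_aut (gs i) (gs j) a p)
  (dcoset_pair_reps act_aut D_reps gs_inj kkP l)); last first.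
  case=> p1 p2; rewrite inE negb_and /= => /orP[p1O|p2O].
    by rewrite (transfer_out _ _ _ p1O) (m0l S_submod m_bilin) //; case: beL.
  by rewrite (transfer_out _ _ _ p2O) (m0r S_submod m_bilin) //; case: alL.
rewrite big_imset => [|x1 x2 /[!inE] /andP[x1D _] /andP[x2D _]]; last first.
  exact: (dcoset_pair_injective act_aut D_reps).
apply: eq_big => [x|x _]; first by rewrite inE.
by rewrite /= (transfer_act act_aut c_H1 Yi_reps aiS ai_inv)
  (transfer_act act_aut c_H1 Yj_reps bjS bj_inv).
Qed.
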